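(* For every odd positive integer $N$, the sandpile group $G_{\Gamma_N}$ on an $N\times N$ square domain $\Gamma_N\subset\mathbb{Z}^2$ has a cyclic subgroup isomorphic to $\mathbb{Z}/\tfrac{N+1}{2}\mathbb{Z}$, of order $\tfrac{N+1}{2}$.
   Context: An $N\times N$ square domain is a set $\{a,\dots,a+N-1\}\times\{b,\dots,b+N-1\}\subset\mathbb{Z}^2$. For finite $\Gamma\subset\mathbb{Z}^2$, the reduced Laplacian is $(\Delta_\Gamma f)(v)=\sum_{w\in\Gamma,\,w\sim v}f(w)-4f(v)$ (nearest-neighbor adjacency in $\mathbb{Z}^2$; all vertices outside $\Gamma$ are contracted to a sink), and the sandpile group is $G_\Gamma=\mathbb{Z}^\Gamma/\Delta_\Gamma(\mathbb{Z}^\Gamma)$. *)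

From mathcomp Require Import all_boot all_order all_algebra.
Unset Implicit Arguments.
Import Order.TTheory GRing.Theory Num.Theory.
Local Open Scope ring_scope.

Definition sq_pt (N : nat) (a b : int) (v : 'I_N * 'I_N) : int * int :=
  (a + (v.1 : nat)%:Z, b + (v.2 : nat)%:Z).

Definition Z2adj (p q : int * int) : bool :=
  (`|p.1 - q.1| + `|p.2 - q.2|)%N == 1%N.

(* reduced Laplacian of the square domain (outside vertices contracted to the sink) *)
Definition sq_laplacian (N : nat) (a b : int) (f : 'I_N * 'I_N -> int)
    (v : 'I_N * 'I_N) : int :=
  \sum_(w : 'I_N * 'I_N | Z2adj (sq_pt N a b v) (sq_pt N a b w)) f w - 4 * f v.

(* g lies in the subgroup Delta(Z^Gamma), i.e. g = 0 in the sandpile group *)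
Definition in_lap_image (N : nat) (a b : int) (g : 'I_N * 'I_N -> int) : Prop :=
  exists f : 'I_N * 'I_N -> int, forall v, g v = sq_laplacian N a b f v.

(* The sandpile group G = Z^Gamma / Delta(Z^Gamma) contains a cyclic subgroup
   isomorphic to Z/mZ: some class [x] generates a subgroup with
   k[x] = 0  <->  m | k  (so <[x]> ~= Z/mZ, of order m). *)
Definition sandpile_has_cyclic_subgroup (N : nat) (a b : int) (m : nat) : Prop :=
  exists x : 'I_N * 'I_N -> int,
    forall k : int,
      in_lap_image N a b (fun v => k * x v) <-> (m%:Z %| k)%Z.

From mathcomp Require Import all_boot all_order all_algebra.
From mathcomp Require Import zify ring.
Import Order.TTheory GRing.Theory Num.Theory.

(* The function h = [dist_prod], h(i, j) = (i + 1)(j + 1), extended by 0 off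
   the grid, vanishes on the sink lines i = -1 and j = -1 and is
   discrete-harmonic except along the far edges i = N - 1 and j = N - 1, so that
   Delta h = -(N + 1) y for the configuration y = [far_edge] supported there.
   If k y = Delta f, then (N + 1) f + k h is harmonic, hence 0 by the maximum
   principle, and evaluating it at the corner (0, 0) gives (N + 1) | k.  So [y]
   has order N + 1 in the sandpile group, and for odd N the class [2 y] has
   order (N + 1) / 2. *)

Local Open Scope ring_scope.

Lemma eq_in_lap_image N a b (g g' : 'I_N * 'I_N -> int) :
  g =1 g' -> in_lap_image N a b g <-> in_lap_image N a b g'.
Proof. by move=> eq_g; split=> -[f f_lap]; exists f => v; rewrite -f_lap eq_g. Qed.

Lemma sandpile_has_cyclic_subgroup_div N a b m d : (0 < d)%N -> (d %| m)%N ->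
  sandpile_has_cyclic_subgroup N a b m ->
  sandpile_has_cyclic_subgroup N a b (m %/ d).
Proof.
move=> d_gt0 /dvdnP[c ->] [x x_order]; rewrite mulnK //.
exists (fun v => d%:Z * x v) => k.
have scale_x v : k * (d%:Z * x v) = k * d%:Z * x v by rewrite mulrA.
apply: iff_trans (@eq_in_lap_image _ _ _ _ _ scale_x) _.
by rewrite x_order PoszM dvdz_mul2r // -lt0n.
Qed.

Section SquareLaplacian.
Variables (N : nat) (a b : int).
Notation V := ('I_N * 'I_N)%type.
Notation lap := (sq_laplacian N a b).

Definition grid_pt (w : V) : int * int := ((w.1 : nat)%:Z, (w.2 : nat)%:Z).

Definition zext (u : V -> int) (p : int * int) : int :=
  \sum_(w : V | grid_pt w == p) u w.

Lemma grid_pt_inj : injective grid_pt.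
Proof.
move=> [x1 x2] [y1 y2]; rewrite /grid_pt /= => -[h1 h2].
by congr pair; apply: val_inj.
Qed.

Lemma zext_grid_pt u w : zext u (grid_pt w) = u w.
Proof.
rewrite /zext (bigD1 w) //= big1 ?addr0 // => w' /andP[/eqP/grid_pt_inj -> ].
by rewrite eqxx.
Qed.

Lemma zext_out u p : (forall w, grid_pt w != p) -> zext u p = 0.
Proof. by move=> p_out; rewrite /zext big1 // => w; rewrite (negbTE (p_out w)). Qed.

Lemma zextP u p : zext u p = 0 \/ exists2 w, grid_pt w = p & zext u p = u w.
Proof.
case: (pickP (fun w => grid_pt w == p)) => [w /eqP <-|p_out].
  by right; exists w; rewrite ?zext_grid_pt.
by left; apply: zext_out => w; rewrite p_out.
Qed.

(* Adjacency is translation invariant, so the offset (a, b) disappears. *)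
Lemma sq_laplacianE u v :
  lap u v =
  zext u ((v.1 : nat)%:Z + 1, (v.2 : nat)%:Z) + zext u ((v.1 : nat)%:Z - 1, (v.2 : nat)%:Z)
  + zext u ((v.1 : nat)%:Z, (v.2 : nat)%:Z + 1) + zext u ((v.1 : nat)%:Z, (v.2 : nat)%:Z - 1)
  - 4 * u v.
Proof.
congr (_ - _).
rewrite /zext big_mkcond [X in X + _ + _ + _]big_mkcond [X in _ + X + _ + _]big_mkcond.
rewrite [X in _ + _ + X + _]big_mkcond [X in _ + _ + _ + X]big_mkcond -!big_split /=.
apply: eq_bigr => w _.
rewrite /Z2adj /sq_pt /grid_pt /= !xpair_eqE.
set x1 := ((v.1 : nat)%:Z); set x2 := ((v.2 : nat)%:Z).
set y1 := ((w.1 : nat)%:Z); set y2 := ((w.2 : nat)%:Z).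
have -> : a + x1 - (a + y1) = x1 - y1 by ring.
have -> : b + x2 - (b + y2) = x2 - y2 by ring.
case: (y1 =P x1 + 1) => H1; case: (y1 =P x1 - 1) => H2; case: (y2 =P x2 + 1) => H3;
case: (y2 =P x2 - 1) => H4; case: (y1 =P x1) => H5; case: (y2 =P x2) => H6;
case: ifP => /eqP H /=; rewrite ?addr0 ?add0r //; lia.
Qed.

Lemma sq_laplacianD f g v : lap (fun w => f w + g w) v = lap f v + lap g v.
Proof. by rewrite /sq_laplacian big_split /=; ring. Qed.

Lemma sq_laplacianZ c f v : lap (fun w => c * f w) v = c * lap f v.
Proof. by rewrite /sq_laplacian -mulr_sumr; ring. Qed.

(* At a maximal vertex s of least first coordinate, the left neighbour is the
   sink or has a smaller value, so lap u s < 0 as soon as u s > 0. *)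
Lemma sq_subharmonic_le0 u : (forall v, 0 <= lap u v) -> forall v, u v <= 0.
Proof.
move=> u_sub v0; rewrite leNgt; apply/negP => u_v0_gt0.
have [m _ u_max] := @arg_maxP _ _ _ v0 xpredT u isT.
set M := u m.
have M_gt0 : 0 < M by apply: lt_le_trans u_v0_gt0 (u_max v0 isT).
have [s /eqP u_s s_min] :=
  @arg_minnP _ m (fun w : V => u w == M) (fun w : V => (w.1 : nat)) (eqxx M).
have zext_le p : zext u p <= M.
  by case: (zextP u p) => [->|[w _ ->]]; [apply: ltW | apply: u_max].
have zext_left_lt : zext u ((s.1 : nat)%:Z - 1, (s.2 : nat)%:Z) < M.
  case: (zextP u ((s.1 : nat)%:Z - 1, (s.2 : nat)%:Z)) => [->//|[w w_left ->]].
  have u_w_le : u w <= M := u_max w isT.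
  rewrite lt_neqAle u_w_le andbT; apply/eqP => u_w.
  have := s_min w (introT eqP u_w).
  by move: w_left; rewrite /grid_pt => -[w_left _]; lia.
have := u_sub s; rewrite sq_laplacianE u_s.
have := zext_le ((s.1 : nat)%:Z + 1, (s.2 : nat)%:Z).
have := zext_le ((s.1 : nat)%:Z, (s.2 : nat)%:Z + 1).
have := zext_le ((s.1 : nat)%:Z, (s.2 : nat)%:Z - 1).
move: zext_left_lt.
set e1 := zext u (_ - 1, _); set e2 := zext u (_, _ - 1).
set e3 := zext u (_, _ + 1); set e4 := zext u (_ + 1, _).
lia.
Qed.

Lemma sq_laplacian_inj u : (forall v, lap u v = 0) -> forall v, u v = 0.
Proof.
move=> u_harm v.
have u_sub w : 0 <= lap u w by rewrite u_harm.
have neg_u_sub w : 0 <= lap (fun w => -1 * u w) w.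
  by rewrite sq_laplacianZ u_harm mulr0.
have := sq_subharmonic_le0 _ u_sub v; have /= := sq_subharmonic_le0 _ neg_u_sub v.
lia.
Qed.

Definition dist_prod (w : V) : int := ((w.1 : nat)%:Z + 1) * ((w.2 : nat)%:Z + 1).

Definition far_edge (w : V) : int :=
  (if (w.1 : nat).+1 == N then (w.2 : nat)%:Z + 1 else 0) +
  (if (w.2 : nat).+1 == N then (w.1 : nat)%:Z + 1 else 0).

Lemma zext_dist_prod p : zext dist_prod p =
  if (0 <= p.1 < N%:Z) && (0 <= p.2 < N%:Z) then (p.1 + 1) * (p.2 + 1) else 0.
Proof.
case: ifP => [/andP[/andP[p1_ge0 p1_lt] /andP[p2_ge0 p2_lt]]|p_out].
  have p1_ord : (absz p.1 < N)%N by lia.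
  have p2_ord : (absz p.2 < N)%N by lia.
  have -> : p = grid_pt (Ordinal p1_ord, Ordinal p2_ord).
    by rewrite /grid_pt /= {1}[p]surjective_pairing; congr pair; lia.
  by rewrite zext_grid_pt.
apply: zext_out => w; apply/eqP => w_p; move: p_out; rewrite -w_p /grid_pt /=.
by have := ltn_ord w.1; have := ltn_ord w.2; lia.
Qed.

Lemma sq_laplacian_dist_prod v : lap dist_prod v = - (N.+1%:Z * far_edge v).
Proof.
rewrite sq_laplacianE !zext_dist_prod /= /far_edge /dist_prod.
have := ltn_ord v.1; have := ltn_ord v.2.
case: v => [i j] /=; move: (i : nat) (j : nat) => x y y_lt x_lt.
by repeat case: ifP; nia.
Qed.

Lemma sandpile_has_cyclic_subgroup_far_edge :
  sandpile_has_cyclic_subgroup N a b N.+1.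
Proof.
exists far_edge => k; split; last first.
  move=> /dvdzP[q ->]; exists (fun w => - q * dist_prod w) => v.
  by rewrite sq_laplacianZ sq_laplacian_dist_prod; ring.
case: (posnP N) => [N0 _|N_gt0 [f kf_lap]]; first by rewrite N0 dvd1z.
have harm v : lap (fun w => N.+1%:Z * f w + k * dist_prod w) v = 0.
  by rewrite sq_laplacianD !sq_laplacianZ -kf_lap sq_laplacian_dist_prod; ring.
have := sq_laplacian_inj _ harm (Ordinal N_gt0, Ordinal N_gt0).
rewrite /dist_prod /= => corner.
by apply/dvdzP; exists (- f (Ordinal N_gt0, Ordinal N_gt0)); lia.
Qed.

End SquareLaplacian.

Theorem lemma3 (N : nat) (a b : int) :
  odd N -> sandpile_has_cyclic_subgroup N a b N.+1./2.
Proof.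
move=> N_odd; rewrite -divn2.
apply: sandpile_has_cyclic_subgroup_div => //; last first.
  exact: sandpile_has_cyclic_subgroup_far_edge.
by rewrite dvdn2 /= N_odd.
Qed.
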